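(* For every $X\in\mathcal{W}_4^3$ and every $0\le j\le 2$, $\tilde H_j(X;\mathbb{Z})=0$.
   Context: $\mathbb{I}_n$ is the hypercube graph on $\{0,1\}^n$ with Hamming distance; $\mathcal{VR}(G;3)$ is the simplicial complex of vertex sets of pairwise Hamming distance $\le 3$. For distinct $j_1,\dots,j_t\in[n]$ and $\epsilon_1,\dots,\epsilon_t\in\{0,1\}$, $\mathbb{I}_n^{(j_1,\epsilon_1),\dots,(j_t,\epsilon_t)}$ is the induced subgraph on $\{v: v(j_l)=\epsilon_l,\ 1\le l\le t\}$; an $m$-dimensional cube subgraph is one of these with $t=n-m$ (with $t=0$ giving $\mathbb{I}_n$). For such $H$ and $\lambda\notin\{j_1,\dots,j_t\}$, $\epsilon\in\{0,1\}$, $H^{(\lambda,\epsilon)}$ is the induced subgraph of $H$ on vertices with $v(\lambda)=\epsilon$, and $\partial(\mathcal{VR}(H;3))=\bigcup_{\lambda\notin\{j_l\},\epsilon}\mathcal{VR}(H^{(\lambda,\epsilon)};3)$. For $n\ge4$ and $3\le m\le n$, $\mathcal{W}_n^m$ is the collection of all finite unions $X=X_1\cup\dots\cup X_k$ ($k\ge1$) such that: each $X_j=\mathcal{VR}(H_j;3)$ for some $m$-dimensional cube subgraph $H_j$ of $\mathbb{I}_n$; and if $m\ne n$, then $X\subseteq\mathcal{VR}(H;3)$ for some $(m+1)$-dimensional cube subgraph $H=\mathbb{I}_n^{(j_1,\epsilon_1),\dots,(j_{n-m-1},\epsilon_{n-m-1})}$, and moreover if $X\ne\partial(\mathcal{VR}(H;3))$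 then there exist $\lambda\in[n]\setminus\{j_1,\dots,j_{n-m-1}\}$ and $\epsilon\in\{0,1\}$ with $\mathcal{VR}(H^{(\lambda,\epsilon)};3)\subseteq X$ and $\mathcal{VR}(H^{(\lambda,1-\epsilon)};3)\not\subseteq X$. $\tilde H_j$ is reduced simplicial homology. *)

From HB Require Import structures.
From mathcomp Require Import all_boot all_order all_algebra.
Set Implicit Arguments. Unset Strict Implicit. Unset Printing Implicit Defensive.
Import Order.TTheory GRing.Theory Num.Theory.
Local Open Scope ring_scope.

Definition cube (n : nat) := {ffun 'I_n -> bool}.

Definition hdist n (v w : cube n) : nat := #|[set i | v i != w i]|.

(** A cube subgraph I_n^{(j_1,e_1),...,(j_t,e_t)} is encoded by a partial
    assignment f : 'I_n -> option bool : f i = Some e means coordinate i is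
    fixed to e (i is one of the j_l), f i = None means coordinate i is free. *)
Definition subcube (n : nat) := {ffun 'I_n -> option bool}.

Definition free_coords n (H : subcube n) : {set 'I_n} := [set i | H i == None].

Definition sc_dim n (H : subcube n) : nat := #|free_coords H|.

Definition sc_verts n (H : subcube n) : {set cube n} :=
  [set v : cube n | [forall i, if H i is Some e then v i == e else true]].

Definition sc_fix n (H : subcube n) (l : 'I_n) (e : bool) : subcube n :=
  [ffun i => if i == l then Some e else H i].

(** Simplicial complexes on the vertex set of I_n, given by their set of
    faces (the empty face is included, which gives the augmented chain
    complex computing reduced homology). *)
Notation complex n := {set {set cube n}}.

Definition VR3 n (H : subcube n) : complex n :=
  [set s : {set cube n} | (s \subset sc_verts H) &&
     [forall x in s, forall y in s, (hdist x y <= 3)%N]].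

Definition bdVR3 n (H : subcube n) : complex n :=
  \bigcup_(l in free_coords H) \bigcup_(e : bool) VR3 (sc_fix H l e).

Definition inW (n m : nat) (X : complex n) : Prop :=
  exists S : {set subcube n},
    [/\ S != set0,
        (forall H, H \in S -> sc_dim H = m),
        X = \bigcup_(H in S) VR3 H &
        (m != n ->
         exists H : subcube n,
           [/\ sc_dim H = m.+1,
               X \subset VR3 H &
               (X != bdVR3 H ->
                exists (l : 'I_n) (e : bool),
                  [/\ l \in free_coords H,
                      VR3 (sc_fix H l e) \subset X &
                      ~~ (VR3 (sc_fix H l (~~ e)) \subset X)])])].

(** Vertices are oriented by the
    order given by enum_rank.  The boundary of an oriented simplex
    [v_0 < ... < v_k] is sum_i (-1)^i [.. omitting v_i ..]; including the
    empty face in dimension -1 yields the augmentation, i.e. reduced chains. *)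
Section Chains.
Variable T : finType.

Definition chain := {ffun {set T} -> int}.

(** sign of v in t :|: [set v] : (-1)^(number of elements of t below v) *)
Definition ord_sign (t : {set T}) (v : T) : int :=
  (-1) ^+ #|[set w in t | (enum_rank w < enum_rank v)%N]|.

Definition bdry (c : chain) : chain :=
  [ffun t : {set T} => \sum_(v : T | v \notin t) ord_sign t v * c (v |: t)].

Definition is_chain_of (X : {set {set T}}) (k : nat) (c : chain) : Prop :=
  forall s, c s != 0 -> s \in X /\ #|s| = k.+1.

Definition reduced_homology_vanishes (X : {set {set T}}) (j : nat) : Prop :=
  forall c : chain, is_chain_of X j c -> bdry c = 0 ->
    exists d : chain, is_chain_of X j.+1 d /\ bdry d = c.
End Chains.

Arguments inW n m X : clear implicits.
Arguments reduced_homology_vanishes T X j : clear implicits.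

From mathcomp Require Import all_boot all_order all_algebra zify ring.
Set Implicit Arguments. Unset Strict Implicit. Unset Printing Implicit Defensive.
Import GRing.Theory.

(* A 3-dimensional subcube of I_4 is a facet {v | v k = b}; its vertices have
   pairwise distance at most 3, so its VR complex is the full simplex.  Hence
   X is the complex of vertex sets lying in one of a family of facets.

   If X contains a facet {v | v l = e} but not the opposite one, setting
   coordinate l to e retracts X onto that facet, a simplex; on chains this
   is realised by collapsing the vertices with v l <> e one at a time.

   Otherwise X is the complex of vertex sets lying in some facet of I_4, a
   3-sphere.  Splitting off one facet, which is a cone, the rest retracts as
   above and the intersection is the same complex one dimension lower, so
   Mayer-Vietoris gives vanishing reduced homology below degree 3. *)

Section SimplicialChains.
Local Open Scope ring_scope.
Variable T : finType.
Implicit Types (t : {set T}) (x y c : chain T).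

Definition rank_sign (u v : T) : int :=
  if (enum_rank u < enum_rank v)%N then -1 else 1.

Lemma rank_signC u v : u != v -> rank_sign u v = - rank_sign v u.
Proof.
move=> neq_uv; rewrite /rank_sign.
have neq_rk : enum_rank u != enum_rank v by rewrite (inj_eq enum_rank_inj).
by case: ltngtP neq_rk => // /val_inj ->; rewrite eqxx.
Qed.

Lemma ord_signU1 t u v : u \notin t ->
  ord_sign (u |: t) v = rank_sign u v * ord_sign t v.
Proof.
move=> ut; rewrite /ord_sign /rank_sign.
set below := [set w in t | _].
case: ifP => uv.
  have -> : [set w in u |: t | (enum_rank w < enum_rank v)%N] = u |: below.
    by apply/setP => w; rewrite !inE; case: (w =P u) => [->|].
  by rewrite cardsU1 inE (negbTE ut) exprS.
have -> : [set w in u |: t | (enum_rank w < enum_rank v)%N] = below.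
  by apply/setP => w; rewrite !inE; case: (w =P u) => [->|]; rewrite ?uv ?andbF.
by rewrite mul1r.
Qed.

Lemma ord_sign_sqr t v : ord_sign t v * ord_sign t v = 1.
Proof. by rewrite /ord_sign -exprD addnn -mul2n exprM sqrrN expr1n. Qed.

Lemma chainDE x y t : (x + y) t = x t + y t. Proof. exact: ffunE. Qed.
Lemma chainBE x y t : (x - y) t = x t - y t. Proof. by rewrite !ffunE. Qed.
Lemma chainNE x t : (- x) t = - x t. Proof. exact: ffunE. Qed.

Lemma bdryD x y : bdry (x + y) = bdry x + bdry y.
Proof.
apply/ffunP => t; rewrite !ffunE -big_split; apply: eq_bigr => v _.
by rewrite !ffunE mulrDr.
Qed.

Lemma bdryB x y : bdry (x - y) = bdry x - bdry y.
Proof.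
apply/ffunP => t; rewrite !ffunE -sumrB; apply: eq_bigr => v _.
by rewrite !ffunE mulrBr.
Qed.

Lemma bdry_bdry x : bdry (bdry x) = 0.
Proof.
apply/ffunP => t; rewrite !ffunE.
pose f v u := if (v \notin t) && (u \notin t) && (u != v)
  then ord_sign t v * (ord_sign (v |: t) u * x (u |: (v |: t))) else 0.
have -> : \sum_(v | v \notin t) ord_sign t v * bdry x (v |: t) = \sum_v \sum_u f v u.
  rewrite big_mkcond; apply: eq_bigr => v _; rewrite /f.
  case: (boolP (v \notin t)) => vt /=; last by rewrite big1.
  rewrite ffunE mulr_sumr big_mkcond; apply: eq_bigr => u _.
  by rewrite !inE negb_or [~~ _ && _]andbC; case: ifP.
(* Interchanging the two deleted vertices flips the sign of each term. *)
have f_anti v u : f v u = - f u v.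
  rewrite /f eq_sym; case: (boolP (v \notin t)) => vt; case: (boolP (u \notin t)) => ut;
    case: (boolP (v != u)) => //= neq_vu; rewrite ?oppr0 //.
  rewrite (ord_signU1 _ vt) (ord_signU1 _ ut) (rank_signC neq_vu) setUCA; ring.
suff : \sum_v \sum_u f v u = - \sum_v \sum_u f v u by lia.
rewrite {1}exchange_big -sumrN; apply: eq_bigr => u _.
by rewrite -sumrN; apply: eq_bigr => v _; apply: f_anti.
Qed.

Definition cone (a : T) x : chain T :=
  [ffun t : {set T} => if a \in t then ord_sign (t :\ a) a * x (t :\ a) else 0].

Lemma cone0 a : cone a 0 = 0.
Proof. by apply/ffunP => t; rewrite !ffunE; case: ifP; rewrite ?mulr0. Qed.

Lemma bdry_cone a x : bdry (cone a x) = x - cone a (bdry x).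
Proof.
apply/ffunP => t; rewrite !ffunE; case: (boolP (a \in t)) => a_t; last first.
  rewrite (bigD1 a) //= big1 ?addr0 => [|v /andP [_ neq_va]]; last first.
    by rewrite ffunE !inE eq_sym (negbTE neq_va) (negbTE a_t) mulr0.
  by rewrite ffunE setU11 setU1K // mulrA ord_sign_sqr mul1r.
set t0 := t :\ a.
have def_t : t = a |: t0 by rewrite setD1K.
have a_t0 : a \notin t0 by rewrite !inE eqxx.
rewrite [in RHS](bigD1 a) /=; last by rewrite !inE eqxx.
rewrite mulrDr setD1K // mulrA ord_sign_sqr mul1r opprD addrA subrr add0r.
rewrite mulr_sumr -sumrN; apply: eq_big => [v|v vt].
  by rewrite {1}def_t !inE negb_or andbC.
have neq_va : v != a by apply: contraNneq vt => ->.
have vt0 : v \notin t0 by apply: contra vt; rewrite def_t !inE => ->; rewrite orbT.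
rewrite ffunE !inE a_t orbT.
have -> : (v |: t) :\ a = v |: t0.
  by apply/setP => y; rewrite !inE; case: (y =P v) => [->|]; rewrite ?neq_va ?andbT.
rewrite {1}def_t (ord_signU1 _ a_t0) (ord_signU1 _ vt0).
by rewrite (rank_signC neq_va) /rank_sign; case: ifP => _; ring.
Qed.

End SimplicialChains.

Section VanishingCriteria.
Local Open Scope ring_scope.
Variable T : finType.
Implicit Types (t s : {set T}) (x y c : chain T) (K L : {set {set T}}).
Local Notation rhv := (reduced_homology_vanishes T).

Lemma exists_summand_neq0 (P : pred T) (F : T -> int) :
  \sum_(v | P v) F v != 0 -> exists2 v, P v & F v != 0.
Proof.
case: (pickP [pred v | P v & F v != 0]) => [v /andP [] | none]; first by exists v.
by rewrite big1 ?eqxx // => v Pv; apply/eqP; move: (none v); rewrite /= Pv => /negbFE.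
Qed.

Lemma is_chain_of_sub K L j x : (forall s, s \in K -> #|s| = j.+1 -> s \in L) ->
  is_chain_of K j x -> is_chain_of L j x.
Proof. by move=> KL xK t /xK [tK tsz]; split => //; apply: KL. Qed.

Lemma is_chain_ofD K j x y :
  is_chain_of K j x -> is_chain_of K j y -> is_chain_of K j (x + y).
Proof.
move=> xK yK t; rewrite chainDE.
by have [-> | /xK //] := eqVneq (x t) 0; rewrite add0r => /yK.
Qed.

Lemma is_chain_ofB K j x y :
  is_chain_of K j x -> is_chain_of K j y -> is_chain_of K j (x - y).
Proof.
move=> xK yK t; rewrite chainBE.
by have [-> | /xK //] := eqVneq (x t) 0; rewrite sub0r oppr_eq0 => /yK.
Qed.

Definition chain_restr (P : pred {set T}) c : chain T :=
  [ffun t : {set T} => if P t then c t else 0].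

Lemma is_chain_of_restr K j (P : pred {set T}) c :
  is_chain_of K j c -> is_chain_of [set s in K | P s] j (chain_restr P c).
Proof.
move=> cK t; rewrite ffunE inE; case: ifP => [Pt /cK [-> ->] // | _].
by rewrite eqxx.
Qed.

Lemma chain_restrC (P : pred {set T}) c : c - chain_restr P c = chain_restr (predC P) c.
Proof. by apply/ffunP => t; rewrite !ffunE /=; case: (P t); rewrite ?subrr ?subr0. Qed.

Lemma cone_neq0 a x t : cone a x t != 0 -> a \in t /\ x (t :\ a) != 0.
Proof.
rewrite ffunE; case: ifP => [a_t nz | _]; last by rewrite eqxx.
by split => //; apply: contraNneq nz => ->; rewrite mulr0.
Qed.

Lemma bdry_neq0 K j x t : is_chain_of K j x -> bdry x t != 0 ->
  exists v, [/\ v \notin t, v |: t \in K & #|v |: t| = j.+1].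
Proof.
rewrite ffunE => xK /exists_summand_neq0 [v vt nz]; exists v.
have /xK [] : x (v |: t) != 0 by apply: contraNneq nz => ->; rewrite mulr0.
by [].
Qed.

Lemma is_chain_of_cone K L j a x : is_chain_of L j x ->
  (forall s, s \in L -> #|s| = j.+1 -> a \notin s -> a |: s \in K) ->
  is_chain_of K j.+1 (cone a x).
Proof.
move=> xL L_cone t /cone_neq0 [a_t /xL [tL tsz]].
have a_t' : a \notin t :\ a by rewrite !inE eqxx.
by rewrite -(setD1K a_t) L_cone // cardsU1 a_t' tsz.
Qed.

Lemma rhv_cone K j b :
  (forall s, s \in K -> #|s| = j.+1 -> b \notin s -> b |: s \in K) -> rhv K j.
Proof.
move=> K_cone c cK bc; exists (cone b c); split; first exact: is_chain_of_cone cK K_cone.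
by rewrite bdry_cone bc cone0 subr0.
Qed.

(* Subtracting the boundary of the cone from [w'] over the part of a cycle
   through [w] leaves a cycle avoiding [w]. *)
Lemma rhv_collapse K K' j w w' : w' != w ->
  (forall s, s \in K -> #|s| = j.+1 -> w \in s ->
     w' |: s \in K /\ w' |: (s :\ w) \in K) ->
  {subset K' <= K} -> (forall s, s \in K -> w \notin s -> s \in K') ->
  rhv K' j -> rhv K j.
Proof.
move=> neq_w'w K_push K'K K_K' rhvK' c cK bc.
set cw := chain_restr (fun t => w \in t) c.
have cw_K : is_chain_of [set s in K | w \in s] j cw := is_chain_of_restr cK.
have bcw t : w \in t -> bdry cw t = 0.
  move=> wt; have := congr1 (fun f : chain T => f t) bc.
  rewrite [X in _ = X -> _]ffunE => <-; rewrite !ffunE; apply: eq_bigr => v _.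
  by rewrite ffunE !inE wt orbT.
pose c1 := (c - cw) + cone w' (bdry cw).
have def_c1 : c1 = c - bdry (cone w' cw) by rewrite bdry_cone opprB addrCA addrC.
have c1_K' : is_chain_of K' j c1.
  apply: is_chain_ofD.
    rewrite chain_restrC; apply: is_chain_of_sub (is_chain_of_restr cK) => s.
    by rewrite inE => /andP [sK ws] _; apply: K_K'.
  move=> t /cone_neq0 [w't nz]; have [v [vt]] := bdry_neq0 cw_K nz.
  rewrite inE => /andP [sK ws] ssz.
  have w_t' : w \notin t :\ w' by apply: contra nz => /bcw ->.
  have def_v : w = v by move: ws; rewrite in_setU1 (negbTE w_t') orbF => /eqP.
  subst v.
  have [_] := K_push _ sK ssz (setU11 _ _).
  have w_t : w \notin t by move: w_t'; rewrite !inE eq_sym neq_w'w.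
  rewrite setU1K // setD1K // => tK; split; first exact: K_K'.
  by rewrite -(setD1K w't) cardsU1 !inE eqxx /= -ssz cardsU1 (negbTE w_t').
have bc1 : bdry c1 = 0 by rewrite def_c1 bdryB bdry_bdry bc subr0.
have [d2 [d2_K' bd2]] := rhvK' c1 c1_K' bc1.
exists (cone w' cw + d2); split; last by rewrite bdryD bd2 def_c1 addrC subrK.
apply: is_chain_ofD; last by apply: is_chain_of_sub d2_K' => s /K'K.
apply: is_chain_of_cone cw_K _ => s; rewrite inE => /andP [sK ws] ssz _.
by have [] := K_push _ sK ssz ws.
Qed.

(* The vertices outside [R] are collapsed one at a time along [phi]; what is
   left lies in [R], where [b] is a cone point. *)
Lemma rhv_retract K j (R : {set T}) (phi : T -> T) b :
  b \in R -> (forall w, w \notin R -> phi w \in R) ->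
  (forall s w, s \in K -> #|s| = j.+1 -> w \in s -> w \notin R ->
     phi w |: s \in K /\ phi w |: (s :\ w) \in K) ->
  (forall s, s \in K -> #|s| = j.+1 -> s \subset R -> b |: s \in K) ->
  rhv K j.
Proof.
move=> bR phiR K_push K_cone.
pose KB (B : {set T}) := [set s in K | s :&: ~: R \subset B].
suff rhvKB n (B : {set T}) : B \subset ~: R -> #|B| = n -> rhv (KB B) j.
  have -> : K = KB (~: R) by apply/setP => s; rewrite !inE subsetIr andbT.
  exact: rhvKB.
elim: n B => [|n IHn] B BR cardB.
  apply: (@rhv_cone _ _ b) => s; rewrite !inE => /andP [sK sB] ssz bs.
  have sR : s \subset R.
    apply/subsetP => x xs; apply: contraT => xR.
    by move: (subsetP sB x); rewrite !inE xs xR (cards0_eq cardB) inE => /(_ isT).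
  rewrite K_cone //=; apply/subsetP => x; rewrite !inE => /andP [/predU1P [-> | xs]].
    by rewrite bR.
  by rewrite (subsetP sR).
have [w wB] : {w | w \in B} by apply/sigW/card_gt0P; rewrite cardB.
have wR : w \notin R by move: (subsetP BR _ wB); rewrite inE.
have pwR := phiR _ wR.
apply: (@rhv_collapse _ (KB (B :\ w)) j w (phi w)).
- by apply: contraTneq pwR => ->.
- move=> s; rewrite !inE => /andP [sK sB] ssz ws.
  have [-> ->] := K_push _ _ sK ssz ws wR.
  have push_B (s' : {set T}) : s' \subset phi w |: s -> s' :&: ~: R \subset B.
    move=> s's; apply/subsetP => x; rewrite !inE => /andP [/(subsetP s's) + xR].
    rewrite !inE => /predU1P [xw | xs]; first by rewrite xw pwR in xR.
    by apply: (subsetP sB); rewrite !inE xs xR.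
  by rewrite !push_B // setUS // subD1set.
- move=> s; rewrite !inE => /andP [-> sB] /=.
  by apply: subset_trans sB (subD1set _ _).
- move=> s; rewrite !inE => /andP [-> sB] ws /=.
  apply/subsetP => x xs; rewrite !inE (subsetP sB _ xs) andbT.
  by apply: contraNneq ws => <-; move: xs; rewrite inE => /andP [].
- apply: IHn; first by apply: subset_trans BR; apply: subD1set.
  by move: cardB; rewrite (cardsD1 w B) wB add1n => -[].
Qed.

(* [K] is covered in degree [j+2] by [A] and by the faces of [P], over which
   [b] is a cone point, and [AP] plays the role of their intersection: the
   part of a cycle inside [P] has as boundary a cycle of [AP]; filling it and
   coning off at [b] moves the cycle into [A]. *)
Lemma rhv_mayer_vietoris K (A AP : {set {set T}}) (P : {set T}) b j :
  {subset A <= K} ->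
  (forall s, s \in K -> #|s| = j.+2 -> (s \in A) || (s \subset P)) ->
  (forall s, s \subset P -> #|s| = j.+2 -> b |: s \in K) ->
  (forall s v, s \in A -> s :\ v \in A) ->
  (forall s, s \in AP -> (s \in A) && (s \subset P)) ->
  (forall s, s \in A -> s \subset P -> #|s| = j.+1 -> s \in AP) ->
  rhv A j.+1 -> rhv AP j -> rhv K j.+1.
Proof.
move=> AK K_AP P_cone A_down AP_AP A_AP rhvA rhvAP c cK bc.
set cP := chain_restr (fun t => t \subset P) c.
have cP_P : is_chain_of [set s in K | s \subset P] j.+1 cP := is_chain_of_restr cK.
have cQ_A : is_chain_of A j.+1 (c - cP).
  rewrite chain_restrC; apply: is_chain_of_sub (is_chain_of_restr cK) => s.
  by rewrite inE => /andP [sK /negbTE sP] ssz; move: (K_AP _ sK ssz); rewrite sP orbF.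
have bcP_AP : is_chain_of AP j (bdry cP).
  move=> t nz; have [v [vt]] := bdry_neq0 cP_P nz.
  rewrite inE => /andP [_ vtP]; rewrite cardsU1 vt add1n => -[tsz].
  have tP : t \subset P by apply: subset_trans vtP; apply: subsetUr.
  have : bdry (c - cP) t != 0 by rewrite bdryB bc sub0r chainNE oppr_eq0.
  case/(bdry_neq0 cQ_A) => u [ut /(A_down _ u)]; rewrite setU1K // => tA _.
  by split => //; apply: A_AP.
have [e [e_AP be]] := rhvAP _ bcP_AP (bdry_bdry _).
have e_A : is_chain_of A j.+1 e.
  by apply: is_chain_of_sub e_AP => s /AP_AP /andP [].
pose y := cP - e; pose c1 := (c - cP) + e.
have def_c : c = c1 + y by rewrite /c1 /y addrACA subrK subrr addr0.
have by0 : bdry y = 0 by rewrite /y bdryB be subrr.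
have y_P : is_chain_of (powerset P) j.+1 y.
  apply: is_chain_ofB.
    by apply: is_chain_of_sub cP_P => s; rewrite !inE => /andP [].
  by apply: is_chain_of_sub e_AP => s /AP_AP /andP [_]; rewrite inE.
have bc1 : bdry c1 = 0 by move: bc; rewrite def_c bdryD by0 addr0.
have [d2 [d2_A bd2]] := rhvA c1 (is_chain_ofD cQ_A e_A) bc1.
exists (cone b y + d2); split.
  apply: is_chain_ofD; last by apply: is_chain_of_sub d2_A => s /AK.
  by apply: is_chain_of_cone y_P _ => s; rewrite inE => sP ssz _; apply: P_cone.
by rewrite bdryD bdry_cone by0 cone0 subr0 bd2 addrC -def_c.
Qed.

End VanishingCriteria.

Section FacetComplexes.
Variable n : nat.
Local Notation rhv := (reduced_homology_vanishes (cube n)).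
Implicit Types (f s t : {set cube n}) (C : 'I_n -> bool -> bool).

Definition half (l : 'I_n) (e : bool) : {set cube n} := [set v : cube n | v l == e].

Definition set_coord (l : 'I_n) (e : bool) (w : cube n) : cube n :=
  [ffun i => if i == l then e else w i].

(* The pair [(k, b)] stands for the facet [{v | v k = b}] of the cube. *)
Definition facet_complex f C : complex n :=
  [set s : {set cube n} | (s \subset f) &&
     [exists k, exists b, C k b && [forall x in s, x k == b]]].

Lemma facet_complexI f C s k b : s \subset f -> C k b ->
  {in s, forall x : cube n, x k = b} -> s \in facet_complex f C.
Proof.
move=> sf Ckb s_kb; rewrite inE sf; apply/existsP; exists k; apply/existsP; exists b.
by rewrite Ckb; apply/forall_inP => x /s_kb ->.
Qed.

Lemma facet_complexP f C s : reflect
  (s \subset f /\ exists k b, C k b /\ {in s, forall x : cube n, x k = b})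
  (s \in facet_complex f C).
Proof.
apply: (iffP idP) => [|[sf [k [b [Ckb s_kb]]]]]; last exact: facet_complexI Ckb s_kb.
rewrite inE => /andP [sf /existsP [k /existsP [b /andP [Ckb /forall_inP s_kb]]]].
by split => //; exists k, b; split => // x /s_kb /eqP.
Qed.

Lemma facet_complex_sub f C s t :
  s \in facet_complex f C -> t \subset s -> t \in facet_complex f C.
Proof.
move=> /facet_complexP [sf [k [b [Ckb s_kb]]]] ts.
apply: (facet_complexI (k := k) (b := b)) => //; first exact: subset_trans sf.
by move=> x /(subsetP ts) /s_kb.
Qed.

Lemma eq_facet_complex f1 f2 C1 C2 : f1 =i f2 -> (forall k b, C1 k b = C2 k b) ->
  facet_complex f1 C1 = facet_complex f2 C2.
Proof.
move=> ef eC; apply/setP => s; rewrite !inE (eq_subset_r ef).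
by congr (_ && _); apply: eq_existsb => k; apply: eq_existsb => b; rewrite eC.
Qed.

Lemma set_coord_id l e w : (set_coord l e w) l = e.
Proof. by rewrite ffunE eqxx. Qed.

Lemma rhv_facet_complex_push f C l e b0 j :
  C l e -> b0 \in f -> b0 l = e ->
  (forall s w, s \in facet_complex f C -> #|s| = j.+1 -> w \in s ->
     w \notin half l e -> set_coord l e w |: s \in facet_complex f C) ->
  rhv (facet_complex f C) j.
Proof.
move=> Cle b0f b0l push.
apply: (@rhv_retract _ _ j (half l e) (set_coord l e) b0).
- by rewrite inE b0l.
- by move=> w _; rewrite inE set_coord_id.
- move=> s w sK ssz ws wR; have ws_K := push _ _ sK ssz ws wR.
  by split => //; apply: facet_complex_sub ws_K _; rewrite setUS // subD1set.
- move=> s sK _ sR; have [sf _] := facet_complexP _ _ _ sK.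
  apply: (facet_complexI (k := l) (b := e)) => //.
    by rewrite subUset sub1set b0f.
  by move=> x /setU1P [-> // | /(subsetP sR)]; rewrite inE => /eqP.
Qed.

(* Without the facet opposite to [{v | v l = e}], setting coordinate [l] to
   [e] keeps every face inside its facet. *)
Lemma rhv_facet_complex_retract f C l e b0 j :
  {in f, forall w, set_coord l e w \in f} -> C l e -> ~~ C l (~~ e) ->
  b0 \in f -> b0 l = e -> rhv (facet_complex f C) j.
Proof.
move=> f_set Cle Cle' b0f b0l; apply: rhv_facet_complex_push Cle b0f b0l _.
move=> s w /facet_complexP [sf [k [b [Ckb s_kb]]]] _ ws wR.
have neq_kl : k != l.
  apply: contra Cle' => /eqP eq_kl; subst k; move: Ckb wR; rewrite inE (s_kb _ ws).
  by case: (b); case: (e).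
apply: (facet_complexI (k := k) (b := b)) => //.
  by rewrite subUset sub1set sf andbT f_set // (subsetP sf).
by move=> x /setU1P [-> | /s_kb //]; rewrite ffunE (negbTE neq_kl) s_kb.
Qed.

(* A vertex and its image always share the coordinate [k0 <> l]. *)
Lemma rhv0_facet_complex f C l e b0 k0 : k0 != l -> (forall b, C k0 b) ->
  {in f, forall w, set_coord l e w \in f} -> C l e ->
  b0 \in f -> b0 l = e -> rhv (facet_complex f C) 0.
Proof.
move=> neq_k0l Ck0 f_set Cle b0f b0l; apply: rhv_facet_complex_push Cle b0f b0l _.
move=> s w /facet_complexP [sf _] ssz ws _.
have [x def_s] := cards1P (introT eqP ssz); subst s.
move: ws; rewrite inE => /eqP ->.
apply: (facet_complexI (k := k0) (b := x k0)) => //.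
  by rewrite subUset sf andbT sub1set f_set // (subsetP sf) ?set11.
by move=> y /setU1P [-> | /set1P ->] //; rewrite ffunE (negbTE neq_k0l).
Qed.

(* Split off the facet [{v | v l = e}]: the faces of [f] inside it form a
   cone, and its intersection with the other facets consists of the faces of
   [f :&: half l e] lying in a facet transverse to [l]. *)
Lemma rhv_facet_complex_split f C l e b0 j :
  b0 \in f -> b0 l = e -> C l e ->
  rhv (facet_complex f (fun k b => C k b && ((k, b) != (l, e)))) j.+1 ->
  rhv (facet_complex (f :&: half l e) (fun k b => C k b && (k != l))) j ->
  rhv (facet_complex f C) j.+1.
Proof.
move=> b0f b0l Cle rhvA rhvAP.
apply: (rhv_mayer_vietoris (P := f :&: half l e) (b := b0) _ _ _ _ _ _ rhvA rhvAP).
- move=> s /facet_complexP [sf [k [b [/andP [Ckb _] s_kb]]]].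
  exact: facet_complexI Ckb s_kb.
- move=> s /facet_complexP [sf [k [b [Ckb s_kb]]]] _.
  case: (eqVneq (k, b) (l, e)) => [[eq_kl eq_be] | neq]; last first.
    by rewrite (facet_complexI (k := k) (b := b)) //= Ckb neq.
  subst k b; apply/orP; right; rewrite subsetI sf.
  by apply/subsetP => x xs; rewrite inE s_kb.
- move=> s sP _; apply: (facet_complexI (k := l) (b := e)) => //.
    by rewrite subUset sub1set b0f (subset_trans sP) ?subsetIl.
  move=> x /setU1P [-> // | /(subsetP sP)].
  by rewrite !inE => /andP [_ /eqP].
- by move=> s v sA; apply: facet_complex_sub sA _; apply: subD1set.
- move=> s /facet_complexP [sP [k [b [/andP [Ckb neq_kl] s_kb]]]].
  rewrite sP andbT; apply: (facet_complexI (k := k) (b := b)) => //.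
    exact: subset_trans sP (subsetIl _ _).
  by rewrite Ckb xpair_eqE negb_and neq_kl.
- move=> s /facet_complexP [sf [k [b [/andP [Ckb neq] s_kb]]]] sP ssz.
  apply: (facet_complexI (k := k) (b := b)) => //; rewrite Ckb /=.
  apply: contra neq => /eqP eq_kl; subst k.
  have [x xs] : {x | x \in s} by apply/sigW/card_gt0P; rewrite ssz.
  move: (subsetP sP _ xs); rewrite !inE (s_kb _ xs) => /andP [_ eq_be].
  by rewrite xpair_eqE eqxx eq_be.
Qed.

(* [cube_face m] is the face on which the first [m] coordinates are [true];
   [face_boundary m] is its boundary, a sphere of dimension [n - m - 1]. *)
Definition cube_face (m : nat) : {set cube n} :=
  [set v : cube n | [forall i : 'I_n, (i < m)%N ==> v i]].

Definition face_boundary (m : nat) : complex n :=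
  facet_complex (cube_face m) (fun k _ => (m <= k)%N).

Lemma set_coord_face m (l : 'I_n) e w : (m <= l)%N ->
  w \in cube_face m -> set_coord l e w \in cube_face m.
Proof.
move=> ml; rewrite !inE => /forall_inP wm; apply/forall_inP => i im.
rewrite ffunE; case: eqP => [eq_il | _]; last exact: wm.
by move: im; rewrite eq_il ltnNge ml.
Qed.

Lemma lt_vertex_face m : [ffun i : 'I_n => (i < m)%N] \in cube_face m.
Proof. by rewrite inE; apply/forall_inP => i; rewrite ffunE. Qed.

Lemma cube_faceS m (l : 'I_n) : l = m :> nat ->
  cube_face m :&: half l true =i cube_face m.+1.
Proof.
move=> lm v; rewrite !inE; apply/andP/forall_inP => [[/forall_inP vm vl] i | vm].
  rewrite ltnS leq_eqVlt => /predU1P [im | /vm //].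
  by rewrite (_ : i = l) ?(eqP vl) //; apply: val_inj; rewrite /= im lm.
split; first by apply/forall_inP => i im; apply: vm; rewrite ltnS ltnW.
by rewrite vm // lm.
Qed.

Lemma rhv_face_boundary j m : (j + m + 2 <= n)%N -> rhv (face_boundary m) j.
Proof.
elim: j m => [|j IHj] m jmn; rewrite /face_boundary; have m_lt_n : (m < n)%N by lia.
  have m1_lt_n : (m.+1 < n)%N by lia.
  apply: (@rhv0_facet_complex _ _ (Ordinal m_lt_n) false _ (Ordinal m1_lt_n)).
  - by rewrite -val_eqE /= neq_ltn ltnSn orbT.
  - by move=> _ /=.
  - by move=> w; apply: set_coord_face.
  - exact: leqnn.
  - exact: lt_vertex_face.
  - by rewrite ffunE ltnn.
apply: (@rhv_facet_complex_split _ _ (Ordinal m_lt_n) true [ffun _ => true]).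
- by rewrite inE; apply/forall_inP => i; rewrite ffunE.
- by rewrite ffunE.
- exact: leqnn.
- apply: (@rhv_facet_complex_retract _ _ (Ordinal m_lt_n) false
           [ffun i : 'I_n => (i < m)%N]).
  + by move=> w; apply: set_coord_face.
  + by rewrite /= leqnn xpair_eqE eqxx.
  + by rewrite /= eqxx andbF.
  + exact: lt_vertex_face.
  + by rewrite ffunE ltnn.
rewrite (@eq_facet_complex _ (cube_face m.+1) _ (fun k _ => (m.+1 <= k)%N)).
- by apply: IHj; lia.
- exact: cube_faceS.
- by move=> k _; rewrite [(m.+1 <= k)%N]ltn_neqAle andbC -val_eqE eq_sym.
Qed.

End FacetComplexes.

Lemma mem_facet_complexT n (C : 'I_n -> bool -> bool) (s : {set cube n}) :
  (s \in facet_complex [set: cube n] C) =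
  [exists k, exists b, C k b && (s \subset half k b)].
Proof.
rewrite inE subsetT; apply: eq_existsb => k; apply: eq_existsb => b.
by congr (_ && _); apply/forall_inP/subsetP => s_kb x /s_kb; rewrite inE.
Qed.

Lemma half_subset_eq n (k l : 'I_n) (b e : bool) :
  half l e \subset half k b -> (k, b) = (l, e).
Proof.
move=> /subsetP sub; pose x : cube n := [ffun i => if i == l then e else ~~ b].
have := sub x; rewrite !inE !ffunE !eqxx => /(_ isT).
by case: (eqVneq k l) => [-> /eqP -> // | _]; case: (b).
Qed.

Section Subcubes.
Variable n : nat.
Implicit Types (H : subcube n) (x y : cube n).

Definition full_subcube : subcube n := [ffun _ => None].

Lemma sc_dim_full H : sc_dim H = n -> H = full_subcube.
Proof.
move=> dimH; have freeH : free_coords H = setT.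
  by apply/eqP; rewrite eqEcard subsetT cardsT card_ord [X in (_ <= X)%N]dimH leqnn.
by apply/ffunP => i; rewrite ffunE; have := in_setT i; rewrite -freeH inE => /eqP.
Qed.

Lemma sc_dim_facet H : (sc_dim H).+1 = n ->
  exists k b, H = sc_fix full_subcube k b.
Proof.
move=> dimH; have /cards1P [k fixedH] : #|~: free_coords H| == 1.
  apply/eqP; have := cardsC (free_coords H).
  by rewrite card_ord; move: dimH; rewrite /sc_dim; lia.
have : k \in ~: free_coords H by rewrite fixedH set11.
rewrite !inE; case Hk : (H k) => [b|] // _; exists k, b.
apply/ffunP => i; rewrite !ffunE; case: eqP => [-> // | /eqP neq_ik].
have : i \notin ~: free_coords H by rewrite fixedH inE.
by rewrite !inE negbK => /eqP.
Qed.

Lemma sc_verts_facet k b : sc_verts (sc_fix full_subcube k b) = half k b.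
Proof.
apply/setP => v; rewrite !inE; apply/forallP/idP => [/(_ k) | vk i].
  by rewrite ffunE eqxx.
by rewrite !ffunE; case: eqP => [-> |].
Qed.

Lemma hdist_facet x y k : x k = y k -> (hdist x y < n)%N.
Proof.
move=> xyk; rewrite /hdist; apply: leq_ltn_trans (_ : #|[set~ k]| < n)%N.
  apply/subset_leq_card/subsetP => i; rewrite !inE.
  by apply: contra => /eqP ->; rewrite xyk.
by rewrite cardsC1 card_ord prednK ?(leq_ltn_trans _ (ltn_ord k)).
Qed.

End Subcubes.

Local Notation full4 := (full_subcube 4).

Lemma VR3_facet (k : 'I_4) (b : bool) : VR3 (sc_fix full4 k b) = powerset (half k b).
Proof.
apply/setP => s; rewrite !inE sc_verts_facet; apply: andb_idr => /subsetP s_kb.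
apply/forall_inP => x /s_kb; rewrite inE => /eqP xk.
apply/forall_inP => y /s_kb; rewrite inE => /eqP yk.
by apply: (@hdist_facet _ _ _ k); rewrite xk yk.
Qed.

Lemma bigcup_VR3_facets (S : {set subcube 4}) : {in S, forall H, sc_dim H = 3} ->
  \bigcup_(H in S) VR3 H =
  facet_complex [set: cube 4] (fun k b => sc_fix full4 k b \in S).
Proof.
move=> S_dim; apply/setP => s; rewrite mem_facet_complexT.
apply/bigcupP/existsP => [[H HS] | [k /existsP [b /andP [kbS s_kb]]]].
  have [k [b defH]] := @sc_dim_facet _ H (congr1 succn (S_dim H HS)).
  rewrite defH VR3_facet inE in HS * => s_kb.
  by exists k; apply/existsP; exists b; rewrite HS.
by exists (sc_fix full4 k b) => //; rewrite VR3_facet inE.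
Qed.

Lemma bdVR3_full4 : bdVR3 full4 = face_boundary 4 0.
Proof.
have face0 : cube_face 4 0 =i [set: cube 4].
  by move=> v; rewrite !inE; apply/forall_inP.
rewrite /face_boundary (eq_facet_complex face0 (C2 := fun _ _ => true)) //.
apply/setP => s; rewrite mem_facet_complexT.
apply/bigcupP/existsP => [[l _ /bigcupP [e _]] | [k /existsP [b s_kb]]].
  by rewrite VR3_facet inE => s_le; exists l; apply/existsP; exists e.
exists k; first by rewrite inE ffunE.
by apply/bigcupP; exists b => //; rewrite VR3_facet inE.
Qed.

Theorem mainTheorem17 :
  forall X : complex 4, inW 4 3 X ->
  forall j : nat, (j <= 2)%N -> reduced_homology_vanishes (cube 4) X j.
Proof.
move=> X [S [_ S_dim defX outer]] j j_le2.
have [H [dimH _ X_bd]] := outer isT.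
rewrite (sc_dim_full dimH) in X_bd.
have [-> | neqX] := eqVneq X (bdVR3 full4).
  by rewrite bdVR3_full4; apply: rhv_face_boundary; rewrite addn0 addn2.
have [l [e [_ le_X le'_X]]] := X_bd neqX.
rewrite defX bigcup_VR3_facets // in le_X le'_X *.
have le_S : sc_fix full4 l e \in S.
  have := subsetP le_X (half l e); rewrite VR3_facet inE subxx mem_facet_complexT.
  case/(_ isT)/existsP => k /existsP [b /andP [kbS /half_subset_eq [eq_kl eq_be]]].
  by rewrite -eq_kl -eq_be.
have le'_S : sc_fix full4 l (~~ e) \notin S.
  apply: contra le'_X => le'S; apply/subsetP => s.
  rewrite VR3_facet inE mem_facet_complexT => s_le.
  by apply/existsP; exists l; apply/existsP; exists (~~ e); rewrite le'S.
apply: (@rhv_facet_complex_retract _ _ _ l e [ffun _ => e]) => //.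
- by move=> w _; rewrite in_setT.
- by rewrite ffunE.
Qed.
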